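(* Fix $n\ge1$ and $\varepsilon>0$. If $f_1,f_2\in\mathrm{NN}_n$ satisfy $\mathrm{MSE}(f_i)\le R(\mathrm{NN}_n)+\varepsilon$ for $i\in\{1,2\}$, then \[ D(f_1,f_2)\le4\big(R(\mathrm{NN}_n)-R(\mathrm{NN}_{2n})+\varepsilon\big). \]
   Context: $P$ is a distribution on $\mathcal X\times\mathcal Y$ with $\mathcal X\subseteq\mathbb R^m$, $\mathcal Y\subseteq\mathbb R$; expectations are over $(x,y)\sim P$; $\mathrm{MSE}(f)=\mathbb E[(y-f(x))^2]$, $R(\mathcal F)=\inf_{f\in\mathcal F}\mathrm{MSE}(f)$, $D(f_1,f_2)=\mathbb E[(f_1(x)-f_2(x))^2]$. Let $\sigma(t)=\max\{0,t\}$. For $n\ge0$, $\mathrm{NN}_n$ is the class of real-valued functions on $\mathcal X$ computable by a finite directed acyclic graph with at most $n$ internal (non-input, non-output) nodes, where each internal node computes $\sigma(\langle w,u\rangle+b)$ for the vector $u$ of its inputs and some $w,b$, and the output node computes an affine combination of the input coordinates and the internal node values. *)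

From HB Require Import structures.
From mathcomp Require Import all_boot all_order all_algebra.
From mathcomp Require Import all_classical all_reals all_analysis.
Set Implicit Arguments. Unset Strict Implicit. Unset Printing Implicit Defensive.
Import Order.TTheory GRing.Theory Num.Theory.
Local Open Scope ring_scope.
Local Open Scope classical_set_scope.

Definition relu {R : realType} (t : R) : R := Num.max 0 t.

(* A ReLU network on inputs in R^m (row vectors 'rV_m), with internal nodes
   listed in a topological order 0, 1, ..., k-1 of the DAG.  Internal node j
   receives input coordinate i with weight [win j i] and internal node l < j
   with weight [wh j l]; an absent edge is a zero weight. *)
Record net (R : realType) (m : nat) := Net {
  win  : nat -> 'I_m -> R;
  wh   : nat -> nat -> R;
  bias : nat -> R;
  aout : 'I_m -> R;
  bout : nat -> R;
  cout : R }.

Fixpoint hidden (R : realType) (m : nat) (N : net R m) (x : 'rV[R]_m) (j : nat)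
  : seq R :=
  match j with
  | 0 => [::]
  | j'.+1 =>
      let prev := hidden N x j' in
      rcons prev (relu (\sum_(i < m) win N j' i * x ord0 i
                        + \sum_(l < j') wh N j' l * nth 0 prev l
                        + bias N j'))
  end.

Definition net_eval (R : realType) (m : nat) (k : nat) (N : net R m)
  (x : 'rV[R]_m) : R :=
  \sum_(i < m) aout N i * x ord0 i
  + \sum_(j < k) bout N j * nth 0 (hidden N x k) j
  + cout N.

Definition NN (R : realType) (m n : nat) : set ('rV[R]_m -> R) :=
  [set f | exists k (N : net R m), (k <= n)%N /\ f = net_eval k N].

Section Risk.
Context {d : measure_display} {T : measurableType d} {R : realType}.
Context (P : probability T R) {m : nat} (x : T -> 'rV[R]_m) (y : T -> R).
Local Open Scope ereal_scope.

(* (x, y) ~ P is realised as the pair of random variables (x, y) on (T, P). *)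
Definition MSE (f : 'rV[R]_m -> R) : \bar R :=
  \int[P]_t (((y t - f (x t)) ^+ 2)%R)%:E.

Definition risk (F : set ('rV[R]_m -> R)) : \bar R :=
  ereal_inf [set MSE f | f in F].

Definition Dist (f1 f2 : 'rV[R]_m -> R) : \bar R :=
  \int[P]_t (((f1 (x t) - f2 (x t)) ^+ 2)%R)%:E.
End Risk.

From HB Require Import structures.
From mathcomp Require Import all_boot all_order all_algebra.
From mathcomp Require Import all_classical all_reals all_analysis.
From mathcomp Require Import measurable_realfun ring lra.
Import Order.TTheory GRing.Theory Num.Theory.
Local Open Scope ring_scope.
Local Open Scope classical_set_scope.

(* Running two networks with n internal nodes side by side and averaging their
   outputs gives a network with 2n nodes computing g = (f1 + f2) / 2.
   Integrating the parallelogram identity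
     (y - f1)^2 + (y - f2)^2 = 2 (y - g)^2 + (f1 - f2)^2 / 2
   gives D(f1, f2) + 4 MSE(g) = 2 MSE(f1) + 2 MSE(f2) <= 4 (R(NN_n) + eps),
   while MSE(g) >= R(NN_2n).  Both risks are finite, since the zero function is
   a network and y^2 is integrable, so the two bounds can be subtracted. *)

Section Networks.
Context {R : realType} {m : nat}.
Implicit Types (N : net R m) (z : 'rV[R]_m).

Definition node_value N z j : R := nth 0 (hidden N z j.+1) j.

Lemma size_hidden N z j : size (hidden N z j) = j.
Proof. by elim: j => //= j IH; rewrite size_rcons IH. Qed.

Lemma nth_hidden N z j l :
  nth 0 (hidden N z j) l = if (l < j)%N then node_value N z l else 0.
Proof.
elim: j l => [|j IH] l; first by rewrite nth_nil.
rewrite /= nth_rcons size_hidden.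
case: (ltngtP l j) => [lj|jl|->].
- by rewrite IH lj ltnS ltnW.
- by rewrite ltnS leqNgt jl.
- by rewrite ltnSn /node_value /= nth_rcons size_hidden ltnn eqxx.
Qed.

Lemma node_valueE N z j : node_value N z j =
  relu (\sum_(i < m) win N j i * z ord0 i
        + \sum_(l < j) wh N j l * node_value N z l + bias N j).
Proof.
rewrite /node_value /= nth_rcons size_hidden ltnn eqxx.
by congr (relu (_ + _ + _)); apply: eq_bigr => l _; rewrite nth_hidden ltn_ord.
Qed.

Lemma net_evalE k N z : net_eval k N z =
  \sum_(i < m) aout N i * z ord0 i
  + \sum_(j < k) bout N j * node_value N z j + cout N.
Proof.
by congr (_ + _ + _); apply: eq_bigr => j _; rewrite nth_hidden ltn_ord.
Qed.

(* Node [j < k1] is node [j] of [N1] and node [k1 + j] is node [j] of [N2];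
   no edge joins the two blocks, and the output averages the two outputs. *)
Definition net_avg N1 N2 (k1 : nat) : net R m := Net
  (fun j i => if (j < k1)%N then win N1 j i else win N2 (j - k1) i)
  (fun j l => if (j < k1)%N then wh N1 j l
              else if (l < k1)%N then 0 else wh N2 (j - k1) (l - k1))
  (fun j => if (j < k1)%N then bias N1 j else bias N2 (j - k1))
  (fun i => (aout N1 i + aout N2 i) / 2)
  (fun j => (if (j < k1)%N then bout N1 j else bout N2 (j - k1)) / 2)
  ((cout N1 + cout N2) / 2).

Lemma node_value_avg N1 N2 k1 z j : node_value (net_avg N1 N2 k1) z j =
  if (j < k1)%N then node_value N1 z j else node_value N2 z (j - k1).
Proof.
elim/ltn_ind: j => j IH; case: (ltnP j k1) => [jk1|/subnKC jE].
- rewrite !node_valueE /= jk1; congr (relu (_ + _ + _)).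
  by apply: eq_bigr => l _; rewrite IH ?ltn_ord // (ltn_trans (ltn_ord l) jk1).
- rewrite -jE in IH *; move: (j - k1)%N IH => j' IH.
  rewrite !node_valueE /= ltnNge leq_addr /= addKn; congr (relu (_ + _ + _)).
  rewrite big_split_ord /= big1 ?add0r => [|l _]; last by rewrite ltn_ord mul0r.
  apply: eq_bigr => l _ /=.
  by rewrite IH ?ltn_add2l // !ltnNge !leq_addr /= !addKn.
Qed.

Lemma net_eval_avg N1 N2 k1 k2 z :
  net_eval (k1 + k2) (net_avg N1 N2 k1) z =
  (net_eval k1 N1 z + net_eval k2 N2 z) / 2.
Proof.
rewrite !net_evalE big_split_ord /=.
have -> : \sum_(j < k1) bout (net_avg N1 N2 k1) (lshift k2 j) *
    node_value (net_avg N1 N2 k1) z (lshift k2 j) =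
  (\sum_(j < k1) bout N1 j * node_value N1 z j) / 2.
  by rewrite mulr_suml; apply: eq_bigr => j _; rewrite node_value_avg /= ltn_ord mulrAC.
have -> : \sum_(j < k2) bout (net_avg N1 N2 k1) (rshift k1 j) *
    node_value (net_avg N1 N2 k1) z (rshift k1 j) =
  (\sum_(j < k2) bout N2 j * node_value N2 z j) / 2.
  rewrite mulr_suml; apply: eq_bigr => j _.
  by rewrite node_value_avg /= ltnNge leq_addr /= addKn mulrAC.
have -> : \sum_(i < m) aout (net_avg N1 N2 k1) i * z ord0 i =
  (\sum_(i < m) aout N1 i * z ord0 i + \sum_(i < m) aout N2 i * z ord0 i) / 2.
  by rewrite -big_split mulr_suml; apply: eq_bigr => i _; rewrite mulrAC mulrDl.
rewrite /=; lra.
Qed.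

Lemma NN_avg n1 n2 (f1 f2 : 'rV[R]_m -> R) : NN n1 f1 -> NN n2 f2 ->
  NN (n1 + n2) (fun z => (f1 z + f2 z) / 2).
Proof.
move=> [k1 [N1 [k1n1 ->]]] [k2 [N2 [k2n2 ->]]].
exists (k1 + k2)%N, (net_avg N1 N2 k1); split; first exact: leq_add.
by apply/funext => z; rewrite net_eval_avg.
Qed.

Definition net0 : net R m :=
  Net (fun _ _ => 0) (fun _ _ => 0) (fun _ => 0) (fun _ => 0) (fun _ => 0) 0.

Lemma NN0 n : NN n (fun _ : 'rV[R]_m => 0).
Proof.
exists 0%N, net0; split => //; apply/funext => z.
by rewrite net_evalE big_ord0 big1 ?addr0 // => i _; rewrite mul0r.
Qed.

End Networks.

Section Measurability.
Context {d : measure_display} {T : measurableType d} {R : realType} {m : nat}.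
Context {x : T -> 'rV[R]_m}.
Hypothesis mx : forall i, measurable_fun setT (fun t => x t ord0 i).

Lemma measurable_node_value (N : net R m) j :
  measurable_fun setT (fun t => node_value N (x t) j).
Proof.
elim/ltn_ind: j => j IH; under eq_fun do rewrite node_valueE /relu.
apply: measurable_maxr => //; apply: measurable_funD => //.
apply: measurable_funD; apply: measurable_sum => i; apply: measurable_funM => //.
exact: IH.
Qed.

Lemma measurable_NN {n} {f : 'rV[R]_m -> R} :
  NN n f -> measurable_fun setT (fun t => f (x t)).
Proof.
move=> [k [N [_ ->]]]; under eq_fun do rewrite net_evalE.
apply: measurable_funD => //; apply: measurable_funD; apply: measurable_sum => i.
  exact: measurable_funM.
by apply: measurable_funM => //; exact: measurable_node_value.
Qed.

End Measurability.

Section ExtendedReals.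
Local Open Scope ereal_scope.

Lemma integral_comb_sqr d (T : measurableType d) (R : realType)
    (mu : {measure set T -> \bar R}) (a b : R) (f g : T -> R) :
  (0 <= a)%R -> (0 <= b)%R -> measurable_fun setT f -> measurable_fun setT g ->
  \int[mu]_t ((a * f t ^+ 2 + b * g t ^+ 2)%R%:E)
  = a%:E * \int[mu]_t ((f t ^+ 2)%:E) + b%:E * \int[mu]_t ((g t ^+ 2)%:E).
Proof.
move=> a0 b0 mf mg.
have sqr_ge0E (w : T -> R) t : [set: T] t -> 0 <= (w t ^+ 2)%:E.
  by rewrite lee_fin sqr_ge0.
have msqr (w : T -> R) : measurable_fun setT w ->
    measurable_fun setT (fun t => (w t ^+ 2)%:E).
  by move=> mw; apply/measurable_EFinP; exact: measurable_funX.
under eq_integral do rewrite EFinD (EFinM a) (EFinM b).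
have scaled_ge0 (c : R) (w : T -> R) : (0 <= c)%R ->
    forall t, True -> 0 <= c%:E * (w t ^+ 2)%:E.
  by move=> c0 t _; rewrite mule_ge0 // lee_fin sqr_ge0.
rewrite ge0_integralD //= ?ge0_integralZl_EFin //.
- exact: sqr_ge0E.
- exact: msqr.
- exact: sqr_ge0E.
- exact: msqr.
- exact: scaled_ge0.
- by apply: measurable_funeM; exact: msqr.
- exact: scaled_ge0.
- by apply: measurable_funeM; exact: msqr.
Qed.

Lemma lee_subr_of_adde_eq {R : realDomainType} {a b c : \bar R} {r s : R} :
  0 <= a -> 0 <= b -> s%:E <= b -> c <= r%:E -> a + b = c -> a <= (r - s)%:E.
Proof.
move=> a0 b0 sb + abc; rewrite -abc.
case: a b a0 b0 sb {abc} => [a| |] [b| |] //=; rewrite ?leye_eq //.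
by rewrite !lee_fin; lra.
Qed.

End ExtendedReals.

Section SquareLoss.
Context {d : measure_display} {T : measurableType d} {R : realType}.
Context (P : probability T R) {m : nat} (x : T -> 'rV[R]_m) (y : T -> R).
Local Open Scope ereal_scope.

Lemma MSE_ge0 f : 0 <= MSE P x y f.
Proof. by apply: integral_ge0 => t _; rewrite lee_fin sqr_ge0. Qed.

Lemma Dist_ge0 f1 f2 : 0 <= Dist P x f1 f2.
Proof. by apply: integral_ge0 => t _; rewrite lee_fin sqr_ge0. Qed.

Lemma risk_le_MSE F f : F f -> risk P x y F <= MSE P x y f.
Proof. by move=> Ff; apply: ereal_inf_lbound; exists f. Qed.

Lemma risk_NN_fin_num n :
  P.-integrable setT (fun t => ((y t) ^+ 2)%:E) -> risk P x y (NN n) \is a fin_num.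
Proof.
move=> /integrableP[_ y2_finite].
rewrite ge0_fin_numE; last by apply: le_ereal_inf_tmp => _ [f _ <-]; exact: MSE_ge0.
apply: le_lt_trans (risk_le_MSE _ _ (NN0 n)) _.
suff -> : MSE P x y (fun=> 0%R) = \int[P]_t `|(y t ^+ 2)%:E| by [].
by apply: eq_integral => t _; rewrite subr0 gee0_abs // lee_fin sqr_ge0.
Qed.

Lemma Dist_add_MSE_avg {f1 f2 : 'rV[R]_m -> R} :
  measurable_fun setT (fun t => f1 (x t)) -> measurable_fun setT (fun t => f2 (x t)) ->
  measurable_fun setT y ->
  Dist P x f1 f2 + 4%:E * MSE P x y (fun z => (f1 z + f2 z) / 2)%R
  = 2%:E * MSE P x y f1 + 2%:E * MSE P x y f2.
Proof.
move=> mf1 mf2 my; rewrite /Dist /MSE -[X in X + _]mul1e.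
rewrite -!integral_comb_sqr //; last 4 first.
- exact: measurable_funB.
- exact: measurable_funB.
- exact: measurable_funB.
- by apply: measurable_funB => //; apply: measurable_funM => //; exact: measurable_funD.
by apply: eq_integral => t _; congr EFin; field.
Qed.

End SquareLoss.

Theorem corollary2 (d : measure_display) (T : measurableType d) (R : realType)
  (P : probability T R) (m : nat) (x : T -> 'rV[R]_m) (y : T -> R)
  (hx : forall i : 'I_m, measurable_fun setT (fun t => x t ord0 i))
  (hy : measurable_fun setT y)
  (hy2 : P.-integrable setT (fun t => ((y t) ^+ 2)%:E))
  (n : nat) (hn : (1 <= n)%N) (eps : R) (heps : 0 < eps)
  (f1 f2 : 'rV[R]_m -> R) (hf1 : NN (R:=R) (m:=m) n f1) (hf2 : NN (R:=R) (m:=m) n f2)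
  (h1 : (MSE P x y f1 <= risk P x y (NN (R:=R) (m:=m) n) + eps%:E)%E)
  (h2 : (MSE P x y f2 <= risk P x y (NN (R:=R) (m:=m) n) + eps%:E)%E) :
  (Dist P x f1 f2 <= 4%:E * (risk P x y (NN (R:=R) (m:=m) n) - risk P x y (NN (R:=R) (m:=m) (2 * n)) + eps%:E))%E.
Proof.
set g := fun z => (f1 z + f2 z) / 2.
have NNg : NN (2 * n) g by rewrite mul2n -addnn; exact: NN_avg.
have parallelogram := Dist_add_MSE_avg P x y (measurable_NN hx hf1) (measurable_NN hx hf2) hy.
rewrite -(fineK (risk_NN_fin_num P x y n hy2)) in h1 h2 *.
rewrite -(fineK (risk_NN_fin_num P x y (2 * n) hy2)) -EFinB -EFinD -EFinM.
set rn := fine _ in h1 h2 *; set r2 := fine _; rewrite -EFinD in h1 h2.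
have -> : (4 * (rn - r2 + eps) = 4 * (rn + eps) - 4 * r2)%R by ring.
apply: (lee_subr_of_adde_eq (Dist_ge0 _ _ _ _) _ _ _ parallelogram).
- by rewrite mule_ge0 // MSE_ge0.
- by rewrite EFinM lee_wpmul2l // /r2 fineK ?risk_NN_fin_num // risk_le_MSE.
- apply: le_trans (leeD (lee_wpmul2l _ h1) (lee_wpmul2l _ h2)) _ => //.
  by rewrite -EFinM -EFinD lee_fin; lra.
Qed.
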